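(* Let $P\subset\mathbb{R}^2$ be any set with $0\in P$ such that the contingent cone $T_P(0)$ contains neither $(1,\tfrac12)$ nor $(1,-\tfrac12)$. For $p\in P$, $x\in\mathbb{R}^2$, $y\in\mathbb{R}^2$ let $G(p,x,y):=(x_1-p_1-\tfrac12y_1-\tfrac12y_2,\ -x_2-p_2+y_1-y_2)$, $\varphi_1(x):=-\tfrac12x_1+x_2$, $\varphi_2(x):=-\tfrac12x_1-x_2$, and consider the KKT system (for minimizing $\tfrac12x_1^2-\tfrac12x_2^2-\langle p,x\rangle$ subject to $\varphi_1(x)\le0,\varphi_2(x)\le0$) $$g(p,x,y):=(G(p,x,y),(\varphi(x),y))\in C:=\{0_{\mathbb{R}^2}\}\times\operatorname{gph}N_{\mathbb{R}^2_-},$$ with solution map $\Gamma(p):=\{(x,y): g(p,x,y)\in C\}$. Then this system enjoys Robinson stability at $(\bar p,\bar x,\bar y)=(0,0,0)$, and $\Gamma:P\rightrightarrows\mathbb{R}^2\times\mathbb{R}^2$ is Lipschitz-like around $(0,(0,0))$.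
   Context: $\operatorname{gph}N_{\mathbb{R}^2_-}=\{(a,y)\in\mathbb{R}^2\times\mathbb{R}^2: a\le0,\ y\ge0,\ a_iy_i=0,\ i=1,2\}$. Contingent cone $T_P(0)=\{w:\exists t_k\downarrow0,w_k\to w,\ t_kw_k\in P\}$. Robinson stability at $(0,\xi_0)$: there exist $\kappa\ge0$ and neighborhoods $V$ of $0$ in $P$, $U$ of $\xi_0$ with $\operatorname{dist}(\xi;\Gamma(p))\le\kappa\operatorname{dist}(g(p,\xi);C)$ for $(p,\xi)\in V\times U$. Lipschitz-like: there exist $\ell\ge0$ and neighborhoods $V$ of $0$ in $P$, $U$ of $(0,0)$ with $\Gamma(p)\cap U\subset\Gamma(p')+\ell\|p-p'\|\mathbb{B}$ for all $p,p'\in V$. *)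

From Stdlib Require Import Reals Lra.
Open Scope R_scope.

Definition R2 : Type := (R * R)%type.

Definition norm2 (a : R2) : R := sqrt (fst a ^ 2 + snd a ^ 2).
Definition sub2 (a b : R2) : R2 := (fst a - fst b, snd a - snd b).
Definition scal2 (t : R) (a : R2) : R2 := (t * fst a, t * snd a).

Definition contingent_cone0 (P : R2 -> Prop) (w : R2) : Prop :=
  exists (t : nat -> R) (wk : nat -> R2),
    (forall k, 0 < t k) /\ Un_cv t 0 /\
    Un_cv (fun k => fst (wk k)) (fst w) /\ Un_cv (fun k => snd (wk k)) (snd w) /\
    (forall k, P (scal2 (t k) (wk k))).

Definition G (p x y : R2) : R2 :=
  (fst x - fst p - /2 * fst y - /2 * snd y,
   - snd x - snd p + fst y - snd y).
Definition phi (x : R2) : R2 := (- /2 * fst x + snd x, - /2 * fst x - snd x).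

Definition gphN (a y : R2) : Prop :=
  fst a <= 0 /\ snd a <= 0 /\ 0 <= fst y /\ 0 <= snd y /\
  fst a * fst y = 0 /\ snd a * snd y = 0.

Definition inC (u a b : R2) : Prop := u = (0, 0) /\ gphN a b.

Definition Gamma (p : R2) (xi : R2 * R2) : Prop :=
  inC (G p (fst xi) (snd xi)) (phi (fst xi)) (snd xi).

Definition dist4 (xi z : R2 * R2) : R :=
  sqrt (norm2 (sub2 (fst xi) (fst z)) ^ 2 + norm2 (sub2 (snd xi) (snd z)) ^ 2).

Definition dist_g (p : R2) (xi : R2 * R2) (u a b : R2) : R :=
  sqrt (norm2 (sub2 (G p (fst xi) (snd xi)) u) ^ 2
        + norm2 (sub2 (phi (fst xi)) a) ^ 2 + norm2 (sub2 (snd xi) b) ^ 2).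

(* Robinson stability at (0, xi0):
   dist(xi; Gamma(p)) <= kappa * dist(g(p,xi); C) for p in P near 0, xi near xi0.
   Written out: since dist(g;C) = inf_{c in C} |g - c| and dist(xi;Gamma p) is an
   infimum (= +oo if Gamma p is empty), the inequality is equivalent to:
   for every c in C and every eps > 0 there is z in Gamma p with
   |xi - z| <= kappa |g - c| + eps. *)
Definition robinson_stable (P : R2 -> Prop) (xi0 : R2 * R2) : Prop :=
  exists kappa dV dU : R, 0 <= kappa /\ 0 < dV /\ 0 < dU /\
    forall (p : R2) (xi : R2 * R2),
      P p -> norm2 p < dV -> dist4 xi xi0 < dU ->
      forall u a b : R2, inC u a b ->
      forall eps : R, 0 < eps ->
      exists z : R2 * R2, Gamma p z /\ dist4 xi z <= kappa * dist_g p xi u a b + eps.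

Definition lipschitz_like (P : R2 -> Prop) (xi0 : R2 * R2) : Prop :=
  exists l dV dU : R, 0 <= l /\ 0 < dV /\ 0 < dU /\
    forall (p p' : R2) (z : R2 * R2),
      P p -> norm2 p < dV -> P p' -> norm2 p' < dV ->
      Gamma p z -> dist4 z xi0 < dU ->
      exists z' : R2 * R2, Gamma p' z' /\ dist4 z z' <= l * norm2 (sub2 p p').

From Stdlib Require Import Reals Lra Classical ClassicalEpsilon.
Open Scope R_scope.

(* The KKT system is piecewise linear.  According to which constraints are
   active, [Gamma p] consists of explicit linear solutions [sol_* p], each
   available on a closed polyhedral cone [region_* p] of parameters, and every
   solution has size O(|p|).  Following the piece of a given solution or an
   adjacent piece gives a solution at the new parameter within O(|p - q|),
   except when the parameter crosses one of the rays t (1, +-1/2), t > 0, where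
   the unconstrained solution and a one-constraint solution disagree.  There one
   jumps to an arbitrary solution at cost O(|p| + |q|); the contingent cone
   hypothesis keeps the points of P near 0 in a cone away from both rays, so
   that |q| = O(|p - q|) whenever the target parameter q lies in P.  Robinson
   stability follows: replacing (phi(x), y) by the nearest point of the graph of
   the normal cone makes (x, y) an exact solution for a parameter O(dist)-close
   to p. *)

Lemma Rabs_le_bounds x a : Rabs x <= a -> - a <= x <= a.
Proof. unfold Rabs; destruct Rcase_abs; lra. Qed.

Ltac rabs_bounds :=
  repeat match goal with H : Rabs _ <= _ |- _ => apply Rabs_le_bounds in H end.

Lemma Rabs_le_sqrt a X : a ^ 2 <= X -> Rabs a <= sqrt X.
Proof. intros; rewrite <- sqrt_Rsqr_abs; apply sqrt_le_1_alt; unfold Rsqr; lra. Qed.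

Lemma Rle_sqrt_of_sqr_le a X : 0 <= a -> a ^ 2 <= X -> a <= sqrt X.
Proof. intros; rewrite <- (sqrt_pow2 a) by lra; apply sqrt_le_1_alt; lra. Qed.

Lemma sqrt_le_of_le_sqr X Y : 0 <= Y -> X <= Y ^ 2 -> sqrt X <= Y.
Proof. intros; rewrite <- (sqrt_pow2 Y) by lra; apply sqrt_le_1_alt; lra. Qed.

Lemma norm2_sqr v : norm2 v ^ 2 = fst v ^ 2 + snd v ^ 2.
Proof. unfold norm2; apply pow2_sqrt; nra. Qed.

Lemma Rabs_fst_le_norm2 v : Rabs (fst v) <= norm2 v.
Proof. unfold norm2; apply Rabs_le_sqrt; nra. Qed.

Lemma Rabs_snd_le_norm2 v : Rabs (snd v) <= norm2 v.
Proof. unfold norm2; apply Rabs_le_sqrt; nra. Qed.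

Lemma Un_cv_of_Rabs_le_inv_succ (u : nat -> R) l :
  (forall n, Rabs (u n - l) <= / (INR n + 1)) -> Un_cv u l.
Proof.
  intros Hu eps eps_gt0.
  destruct (RinvN_cv eps_gt0) as [M HM]; exists M; intros n Hn.
  specialize (HM n Hn); unfold Rdist, RinvN in *; simpl in HM.
  rewrite Rminus_0_r, Rabs_pos_eq in HM by (left; apply RinvN_pos).
  apply Rle_lt_trans with (2 := HM), Hu.
Qed.

Lemma contingent_cone0_of_seq (P : R2 -> Prop) c (q : nat -> R2) :
  (forall n, P (q n)) -> (forall n, 0 < fst (q n)) ->
  (forall n, Rabs (fst (q n)) <= / (INR n + 1)) ->
  (forall n, Rabs (snd (q n) / fst (q n) - c) <= / (INR n + 1)) ->
  contingent_cone0 P (1, c).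
Proof.
  intros Pq q1_gt0 q1_small slope_close.
  exists (fun n => fst (q n)), (fun n => (1, snd (q n) / fst (q n))); simpl.
  split; [exact q1_gt0|].
  split; [apply Un_cv_of_Rabs_le_inv_succ; intros n; rewrite Rminus_0_r; apply q1_small|].
  split; [apply Un_cv_of_Rabs_le_inv_succ; intros n; rewrite Rminus_diag, Rabs_R0;
          left; apply RinvN_pos|].
  split; [now apply Un_cv_of_Rabs_le_inv_succ|].
  intros n; specialize (Pq n); specialize (q1_gt0 n); unfold scal2; simpl.
  destruct (q n) as [q1 q2]; simpl in *.
  replace (q1 * 1) with q1 by ring; replace (q1 * (q2 / q1)) with q2 by (field; lra).
  assumption.
Qed.

(* Near 0, P misses a cone around the ray t (1, c), t > 0: the quantitative
   form of (1, c) not lying in the contingent cone of P at 0. *)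
Definition away_from_ray (N c : R) (q : R2) : Prop :=
  0 < fst q -> fst q <= N * Rabs (snd q - c * fst q).

Lemma away_from_ray_bound N c q t : 0 <= N -> away_from_ray N c q ->
  0 < fst q -> Rabs (snd q - c * fst q) <= t -> fst q <= N * t.
Proof.
  intros N_ge0 Hq q1_gt0 Ht.
  apply Rle_trans with (N * Rabs (snd q - c * fst q)); auto.
  now apply Rmult_le_compat_l.
Qed.

Lemma away_from_ray_near0 (P : R2 -> Prop) c : ~ contingent_cone0 P (1, c) ->
  exists N dV, 0 <= N /\ 0 < dV /\
    forall q, P q -> norm2 q < dV -> away_from_ray N c q.
Proof.
  intros not_tangent; apply NNPP; intros not_away.
  assert (bad_points : forall n : nat, exists q, P q /\ norm2 q < / (INR n + 1) /\
            0 < fst q /\ (INR n + 1) * Rabs (snd q - c * fst q) < fst q).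
  { intros n; apply NNPP; intros no_bad; apply not_away.
    exists (INR n + 1), (/ (INR n + 1)); pose proof (RinvN_pos n).
    split; [pose proof (pos_INR n); lra | split; [assumption|]].
    intros q Pq q_small q1_gt0; apply Rnot_lt_le; intros q_bad.
    apply no_bad; exists q; auto. }
  destruct (choice _ bad_points) as [q Hq].
  apply not_tangent, (contingent_cone0_of_seq P c q); intros n;
    destruct (Hq n) as (Pq & q_small & q1_gt0 & q_bad); auto.
  - apply Rle_trans with (norm2 (q n)); [apply Rabs_fst_le_norm2 | lra].
  - set (m := INR n + 1) in *; assert (m_gt0 : 0 < m) by (unfold m; pose proof (pos_INR n); lra).
    destruct (q n) as [t s]; simpl in *.
    replace (s / t - c) with ((s - c * t) * / t) by (field; lra).
    rewrite Rabs_mult, Rabs_inv, (Rabs_pos_eq t) by lra.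
    apply Rmult_le_reg_l with (m * t); [nra|].
    replace (m * t * (Rabs (s - c * t) * / t)) with (m * Rabs (s - c * t)) by (field; lra).
    replace (m * t * / m) with t by (field; lra); lra.
Qed.

Definition away_from_critical_rays (N dV : R) (P : R2 -> Prop) : Prop :=
  forall q, P q -> norm2 q < dV -> away_from_ray N (/2) q /\ away_from_ray N (- /2) q.

Lemma away_from_critical_rays_of_cone (P : R2 -> Prop) :
  ~ contingent_cone0 P (1, /2) -> ~ contingent_cone0 P (1, - /2) ->
  exists N dV, 0 <= N /\ 0 < dV /\ away_from_critical_rays N dV P.
Proof.
  intros not_pos not_neg.
  destruct (away_from_ray_near0 P _ not_pos) as (N1 & d1 & N1_ge0 & d1_gt0 & away1).
  destruct (away_from_ray_near0 P _ not_neg) as (N2 & d2 & N2_ge0 & d2_gt0 & away2).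
  exists (N1 + N2), (Rmin d1 d2); split; [lra | split; [now apply Rmin_pos|]].
  intros q Pq q_small; pose proof (Rmin_l d1 d2); pose proof (Rmin_r d1 d2).
  split; intros q1_gt0; [specialize (away1 q Pq ltac:(lra) q1_gt0)
                        | specialize (away2 q Pq ltac:(lra) q1_gt0)];
    pose proof (Rabs_pos (snd q - / 2 * fst q)); pose proof (Rabs_pos (snd q - - / 2 * fst q));
    nra.
Qed.

Definition kkt_param (x y : R2) : R2 :=
  (fst x - /2 * fst y - /2 * snd y, - snd x + fst y - snd y).

Lemma G_kkt_param p x y : G p x y = sub2 (kkt_param x y) p.
Proof. unfold G, sub2, kkt_param; simpl; f_equal; ring. Qed.

Lemma Gamma_iff p x y : Gamma p (x, y) <-> p = kkt_param x y /\ gphN (phi x) y.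
Proof.
  unfold Gamma, inC; simpl; rewrite G_kkt_param.
  destruct p as [p1 p2], (kkt_param x y) as [k1 k2]; unfold sub2; simpl.
  split; intros [E Hg]; split; auto; injection E; intros; f_equal; lra.
Qed.

Definition phi_inv (a : R2) : R2 := (- (fst a + snd a), (fst a - snd a) / 2).

Lemma phi_phi_inv a : phi (phi_inv a) = a.
Proof. destruct a; unfold phi, phi_inv; simpl; f_equal; lra. Qed.

Definition region_free (p : R2) : Prop := 0 <= fst p + 2 * snd p /\ 0 <= fst p - 2 * snd p.
Definition region_act1 (p : R2) : Prop := 0 <= fst p + 2 * snd p /\ 0 <= 2 * fst p + snd p.
Definition region_act2 (p : R2) : Prop := 0 <= fst p - 2 * snd p /\ 0 <= 2 * fst p - snd p.
Definition region_act12 (p : R2) : Prop := 2 * fst p + snd p <= 0 /\ 2 * fst p - snd p <= 0.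

Definition sol_free (p : R2) : R2 * R2 := ((fst p, - snd p), (0, 0)).
Definition sol_act1 (p : R2) : R2 * R2 :=
  (((4 * fst p + 2 * snd p) / 3, (2 * fst p + snd p) / 3), ((2 * fst p + 4 * snd p) / 3, 0)).
Definition sol_act2 (p : R2) : R2 * R2 :=
  (((4 * fst p - 2 * snd p) / 3, - (2 * fst p - snd p) / 3), (0, (2 * fst p - 4 * snd p) / 3)).
Definition sol_act12 (p : R2) : R2 * R2 :=
  ((0, 0), ((- 2 * fst p + snd p) / 2, (- 2 * fst p - snd p) / 2)).

Ltac solve_kkt :=
  apply Gamma_iff; unfold kkt_param, gphN, phi; simpl;
  split; [apply f_equal2; lra | repeat split; lra].

Lemma Gamma_sol_free p : region_free p -> Gamma p (sol_free p).
Proof. destruct p; unfold region_free; simpl; intros; solve_kkt. Qed.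

Lemma Gamma_sol_act1 p : region_act1 p -> Gamma p (sol_act1 p).
Proof. destruct p; unfold region_act1; simpl; intros; solve_kkt. Qed.

Lemma Gamma_sol_act2 p : region_act2 p -> Gamma p (sol_act2 p).
Proof. destruct p; unfold region_act2; simpl; intros; solve_kkt. Qed.

Lemma Gamma_sol_act12 p : region_act12 p -> Gamma p (sol_act12 p).
Proof. destruct p; unfold region_act12; simpl; intros; solve_kkt. Qed.

Lemma Gamma_cases p z : Gamma p z ->
  (region_free p /\ z = sol_free p) \/ (region_act1 p /\ z = sol_act1 p) \/
  (region_act2 p /\ z = sol_act2 p) \/ (region_act12 p /\ z = sol_act12 p).
Proof.
  destruct z as [[x1 x2] [y1 y2]]; rewrite Gamma_iff.
  intros [-> (phi1 & phi2 & y1_ge0 & y2_ge0 & compl1 & compl2)]; simpl in *.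
  unfold region_free, region_act1, region_act2, region_act12,
    sol_free, sol_act1, sol_act2, sol_act12, kkt_param; simpl.
  apply Rmult_integral in compl1, compl2.
  destruct compl1 as [act1 | free1], compl2 as [act2 | free2].
  - do 3 right; split; [lra | apply f_equal2; apply f_equal2; lra].
  - right; left; split; [lra | apply f_equal2; apply f_equal2; lra].
  - do 2 right; left; split; [lra | apply f_equal2; apply f_equal2; lra].
  - left; split; [lra | apply f_equal2; apply f_equal2; lra].
Qed.

Definition coord_close (K : R) (z z' : R2 * R2) : Prop :=
  Rabs (fst (fst z) - fst (fst z')) <= K /\ Rabs (snd (fst z) - snd (fst z')) <= K /\
  Rabs (fst (snd z) - fst (snd z')) <= K /\ Rabs (snd (snd z) - snd (snd z')) <= K.

Ltac coord_close_by_lra :=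
  unfold coord_close; simpl; repeat split; apply Rabs_le; lra.

Lemma dist4_le_coord_close K z z' : coord_close K z z' -> dist4 z z' <= 2 * K.
Proof.
  destruct z as [[a1 a2] [b1 b2]], z' as [[c1 c2] [d1 d2]].
  unfold coord_close, dist4; rewrite !norm2_sqr; unfold sub2; simpl.
  intros (H1 & H2 & H3 & H4).
  assert (K_ge0 : 0 <= K) by (apply Rle_trans with (2 := H1), Rabs_pos).
  apply sqrt_le_of_le_sqr; [lra|].
  apply pow_maj_Rabs with (n := 2%nat) in H1, H2, H3, H4; lra.
Qed.

Lemma Gamma_nonempty q J : Rabs (fst q) <= J -> Rabs (snd q) <= J ->
  exists z, Gamma q z /\ coord_close (2 * J) z ((0, 0), (0, 0)).
Proof.
  destruct q as [q1 q2]; simpl; intros; rabs_bounds.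
  destruct (Rle_or_lt 0 (2 * q1 + q2)), (Rle_or_lt 0 (2 * q1 - q2)), (Rle_or_lt 0 q2).
  all: first
    [ exists (sol_act1 (q1, q2)); split;
        [apply Gamma_sol_act1; unfold region_act1; simpl; lra | coord_close_by_lra]
    | exists (sol_act2 (q1, q2)); split;
        [apply Gamma_sol_act2; unfold region_act2; simpl; lra | coord_close_by_lra]
    | exists (sol_act12 (q1, q2)); split;
        [apply Gamma_sol_act12; unfold region_act12; simpl; lra | coord_close_by_lra] ].
Qed.

Lemma Gamma_bound p z J : Gamma p z -> Rabs (fst p) <= J -> Rabs (snd p) <= J ->
  coord_close (2 * J) z ((0, 0), (0, 0)).
Proof.
  destruct p as [p1 p2]; simpl; intros Hz ? ?; rabs_bounds.
  destruct (Gamma_cases _ _ Hz) as [[R ->] | [[R ->] | [[R ->] | [R ->]]]];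
    revert R; unfold region_free, region_act1, region_act2, region_act12; simpl;
    intros; coord_close_by_lra.
Qed.

Lemma Gamma_jump p q z J K : Gamma p z ->
  Rabs (fst p) <= J -> Rabs (snd p) <= J -> Rabs (fst q) <= J -> Rabs (snd q) <= J ->
  4 * J <= K -> exists z', Gamma q z' /\ coord_close K z z'.
Proof.
  intros Hz ? ? ? ? ?.
  destruct (Gamma_nonempty q J) as [z' [Hz' B']]; auto.
  exists z'; split; auto.
  assert (B := Gamma_bound p z J Hz ltac:(auto) ltac:(auto)).
  destruct B as (? & ? & ? & ?), B' as (? & ? & ? & ?); simpl in *; rabs_bounds.
  unfold coord_close; repeat split; apply Rabs_le; lra.
Qed.

Section Aubin.

Variables (N W : R) (p q : R2).
Hypothesis N_ge0 : 0 <= N.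
Hypothesis away_pos_ray : away_from_ray N (/2) q.
Hypothesis away_neg_ray : away_from_ray N (- /2) q.
Hypothesis dist_fst : Rabs (fst p - fst q) <= W.
Hypothesis dist_snd : Rabs (snd p - snd q) <= W.

Let K := 12 * (N + 1) * W.

Lemma W_NW_ge0 : 0 <= W /\ 0 <= N * W.
Proof.
  assert (0 <= W) by (apply Rle_trans with (2 := dist_fst); apply Rabs_pos).
  split; [|apply Rmult_le_pos]; auto.
Qed.

Ltac use_piece sol Gamma_sol region :=
  exists (sol q); split;
    [apply Gamma_sol; unfold region; lra | unfold K; coord_close_by_lra].

Ltac jump Gamma_sol region :=
  apply (Gamma_jump p q _ (3 * (N + 1) * W));
    [apply Gamma_sol; unfold region; lra | apply Rabs_le; lra .. | unfold K; lra].

Ltac bound_by_ray c away :=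
  pose proof (away_from_ray_bound N c q (3 / 2 * W) N_ge0 away
                ltac:(assumption) ltac:(apply Rabs_le; lra)).

Lemma aubin_free : region_free p -> exists z', Gamma q z' /\ coord_close K (sol_free p) z'.
Proof.
  unfold region_free; intros Rp.
  destruct W_NW_ge0; rabs_bounds.
  destruct (Rle_or_lt 0 (fst q - 2 * snd q)), (Rle_or_lt 0 (fst q + 2 * snd q)).
  1: use_piece sol_free Gamma_sol_free region_free.
  all: destruct (Rle_or_lt (fst q) 0); [jump Gamma_sol_free region_free|].
  - bound_by_ray (- /2) away_neg_ray; jump Gamma_sol_free region_free.
  - bound_by_ray (/2) away_pos_ray; jump Gamma_sol_free region_free.
  - lra.
Qed.

Lemma aubin_act1 : region_act1 p -> exists z', Gamma q z' /\ coord_close K (sol_act1 p) z'.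
Proof.
  unfold region_act1; intros Rp.
  destruct W_NW_ge0; rabs_bounds.
  destruct (Rle_or_lt 0 (fst q + 2 * snd q)).
  - destruct (Rle_or_lt 0 (2 * fst q + snd q)).
    + use_piece sol_act1 Gamma_sol_act1 region_act1.
    + use_piece sol_act12 Gamma_sol_act12 region_act12.
  - destruct (Rle_or_lt (fst q) 0); [jump Gamma_sol_act1 region_act1|].
    bound_by_ray (- /2) away_neg_ray; jump Gamma_sol_act1 region_act1.
Qed.

Lemma aubin_act2 : region_act2 p -> exists z', Gamma q z' /\ coord_close K (sol_act2 p) z'.
Proof.
  unfold region_act2; intros Rp.
  destruct W_NW_ge0; rabs_bounds.
  destruct (Rle_or_lt 0 (fst q - 2 * snd q)).
  - destruct (Rle_or_lt 0 (2 * fst q - snd q)).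
    + use_piece sol_act2 Gamma_sol_act2 region_act2.
    + use_piece sol_act12 Gamma_sol_act12 region_act12.
  - destruct (Rle_or_lt (fst q) 0); [jump Gamma_sol_act2 region_act2|].
    bound_by_ray (/2) away_pos_ray; jump Gamma_sol_act2 region_act2.
Qed.

(* [sol_act12] agrees with [sol_act1] and [sol_act2] on the two boundary rays of
   its region, so no jump is ever needed. *)
Lemma aubin_act12 : region_act12 p -> exists z', Gamma q z' /\ coord_close K (sol_act12 p) z'.
Proof.
  unfold region_act12; intros Rp.
  destruct W_NW_ge0; rabs_bounds.
  destruct (Rle_or_lt (2 * fst q + snd q) 0), (Rle_or_lt (2 * fst q - snd q) 0),
    (Rle_or_lt 0 (snd q)).
  all: first
    [ use_piece sol_act12 Gamma_sol_act12 region_act12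
    | use_piece sol_act1 Gamma_sol_act1 region_act1
    | use_piece sol_act2 Gamma_sol_act2 region_act2 ].
Qed.

Lemma Gamma_aubin z : Gamma p z -> exists z', Gamma q z' /\ coord_close K z z'.
Proof.
  intros Hz; destruct (Gamma_cases p z Hz) as [[R ->] | [[R ->] | [[R ->] | [R ->]]]].
  - now apply aubin_free.
  - now apply aubin_act1.
  - now apply aubin_act2.
  - now apply aubin_act12.
Qed.

End Aubin.

Lemma lipschitz_like_of_away (P : R2 -> Prop) N dV :
  0 <= N -> 0 < dV -> away_from_critical_rays N dV P -> lipschitz_like P ((0, 0), (0, 0)).
Proof.
  intros N_ge0 dV_gt0 away.
  exists (24 * (N + 1)), dV, 1; split; [lra | split; [lra | split; [lra|]]].
  intros p p' z _ _ Pp' p'_small Hz _.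
  destruct (away p' Pp' p'_small) as [away_pos away_neg].
  destruct (Gamma_aubin N (norm2 (sub2 p p')) p p' N_ge0 away_pos away_neg
              (Rabs_fst_le_norm2 (sub2 p p')) (Rabs_snd_le_norm2 (sub2 p p')) z Hz)
    as [z' [Hz' close]].
  exists z'; split; auto.
  apply dist4_le_coord_close in close; lra.
Qed.

Lemma residual_le_dist_g p x y a b :
  norm2 (sub2 (G p x y) (0, 0)) <= dist_g p (x, y) (0, 0) a b /\
  norm2 (sub2 (phi x) a) <= dist_g p (x, y) (0, 0) a b /\
  norm2 (sub2 y b) <= dist_g p (x, y) (0, 0) a b.
Proof.
  unfold dist_g; cbn [fst snd].
  pose proof (pow2_ge_0 (norm2 (sub2 (G p x y) (0, 0)))).
  pose proof (pow2_ge_0 (norm2 (sub2 (phi x) a))).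
  pose proof (pow2_ge_0 (norm2 (sub2 y b))).
  split; [|split]; apply Rle_sqrt_of_sqr_le; try apply sqrt_pos; lra.
Qed.

Lemma Gamma_phi_inv a b : gphN a b -> Gamma (kkt_param (phi_inv a) b) (phi_inv a, b).
Proof. intros; apply Gamma_iff; rewrite phi_phi_inv; auto. Qed.

Lemma robinson_stable_of_away (P : R2 -> Prop) N dV :
  0 <= N -> 0 < dV -> away_from_critical_rays N dV P -> robinson_stable P ((0, 0), (0, 0)).
Proof.
  intros N_ge0 dV_gt0 away.
  exists (100 * (N + 1)), dV, 1; split; [lra | split; [lra | split; [lra|]]].
  intros p [x y] Pp p_small _ u a b [-> gph_ab] eps eps_gt0.
  destruct (away p Pp p_small) as [away_pos away_neg].
  destruct (residual_le_dist_g p x y a b) as (res_G & res_phi & res_y).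
  set (d := dist_g p (x, y) (0, 0) a b) in *.
  assert (d_ge0 : 0 <= d) by apply sqrt_pos.
  assert (Nd_ge0 : 0 <= N * d) by now apply Rmult_le_pos.
  pose proof (Rle_trans _ _ _ (Rabs_fst_le_norm2 _) res_G).
  pose proof (Rle_trans _ _ _ (Rabs_snd_le_norm2 _) res_G).
  pose proof (Rle_trans _ _ _ (Rabs_fst_le_norm2 _) res_phi).
  pose proof (Rle_trans _ _ _ (Rabs_snd_le_norm2 _) res_phi).
  pose proof (Rle_trans _ _ _ (Rabs_fst_le_norm2 _) res_y).
  pose proof (Rle_trans _ _ _ (Rabs_snd_le_norm2 _) res_y).
  pose proof (Gamma_phi_inv a b gph_ab) as exact.
  clearbody d; clear res_G res_phi res_y.
  destruct p as [p1 p2], x as [x1 x2], y as [y1 y2], a as [a1 a2], b as [b1 b2].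
  unfold G, phi, sub2, kkt_param, phi_inv in *; simpl in *; rabs_bounds.
  (* the exact solution [(phi_inv a, b)] sits at a parameter within [4 d] of [p] *)
  destruct (Gamma_aubin N (4 * d) (kkt_param (phi_inv (a1, a2)) (b1, b2)) (p1, p2)
              N_ge0 away_pos away_neg
              ltac:(simpl; apply Rabs_le; lra) ltac:(simpl; apply Rabs_le; lra) _ exact)
    as [[[c1 c2] [e1 e2]] [Hz' close]].
  exists ((c1, c2), (e1, e2)); split; auto.
  assert (close' : coord_close ((48 * (N + 1) + 2) * d) ((x1, x2), (y1, y2)) ((c1, c2), (e1, e2))).
  { unfold coord_close in *; simpl in *; destruct close as (? & ? & ? & ?); rabs_bounds.
    repeat split; apply Rabs_le; lra. }
  apply dist4_le_coord_close in close'.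
  eapply Rle_trans; [exact close' | lra].
Qed.

Theorem mainTheorem16 (P : R2 -> Prop) :
  P (0, 0) ->
  ~ contingent_cone0 P (1, /2) ->
  ~ contingent_cone0 P (1, - /2) ->
  robinson_stable P ((0, 0), (0, 0)) /\ lipschitz_like P ((0, 0), (0, 0)).
Proof.
  intros _ not_pos not_neg.
  destruct (away_from_critical_rays_of_cone P not_pos not_neg)
    as (N & dV & N_ge0 & dV_gt0 & away).
  split.
  - exact (robinson_stable_of_away P N dV N_ge0 dV_gt0 away).
  - exact (lipschitz_like_of_away P N dV N_ge0 dV_gt0 away).
Qed.
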